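(* Let $G$ be a finite group. If $(S,T,U)$ is a TPP triple of $G$ consisting of subgroups $S,T,U$ of $G$, at least one of which is normal in $G$, then $|S|\cdot|T|\cdot|U|\le |G|$.
   Context: For a nonempty subset $X$ of a group $G$, $Q(X):=\{xy^{-1}: x,y\in X\}$ (so $Q(X)=X$ for a subgroup $X$). Nonempty subsets $S,T,U$ of $G$ form a TPP triple if for all $s\in Q(S)$, $t\in Q(T)$, $u\in Q(U)$: $stu=1$ iff $s=t=u=1$. *)

From mathcomp Require Import all_boot all_fingroup.
Set Implicit Arguments. Unset Strict Implicit. Unset Printing Implicit Defensive.
Local Open Scope group_scope.

Definition Qset (gT : finGroupType) (X : {set gT}) : {set gT} :=
  [set x * y^-1 | x in X, y in X].

Definition TPP (gT : finGroupType) (S T U : {set gT}) : Prop :=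
  [/\ S != set0, T != set0, U != set0 &
   forall s t u, s \in Qset S -> t \in Qset T -> u \in Qset U ->
     (s * t * u = 1 <-> [/\ s = 1, t = 1 & u = 1])].

From mathcomp Require Import all_boot all_fingroup.
Set Implicit Arguments. Unset Strict Implicit. Unset Printing Implicit Defensive.
Local Open Scope group_scope.

(* For subgroups the quotient sets Q(X) are the subgroups themselves, so the TPP
   says that a b c = 1 with a, b, c in S, T, U forces a = b = c = 1; this
   condition is invariant under cyclic rotation.  Rotate so that the normal
   subgroup A comes first: then A B is a subgroup with A :&: B = 1 and
   (A B) :&: C = 1, so A B C has exactly |A| |B| |C| elements inside G. *)

Section TrivialTripleProduct.

Variable gT : finGroupType.
Implicit Types A B C G : {group gT}.

Definition trivial_prod3 (A B C : {set gT}) : Prop :=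
  forall a b c, a \in A -> b \in B -> c \in C -> a * b * c = 1 ->
    [/\ a = 1, b = 1 & c = 1].

Lemma Qset_group A : Qset A = A.
Proof.
apply/setP => x; apply/imset2P/idP => [[a b aA bA ->] | xA].
  by rewrite groupM ?groupV.
by exists x 1; rewrite ?group1 ?invg1 ?mulg1.
Qed.

Lemma TPP_trivial_prod3 A B C : TPP A B C -> trivial_prod3 A B C.
Proof.
case=> _ _ _ tppABC a b c aA bB cC.
by have := tppABC a b c; rewrite !Qset_group => /(_ aA bB cC) [].
Qed.

Lemma trivial_prod3_rot (A B C : {set gT}) :
  trivial_prod3 A B C -> trivial_prod3 B C A.
Proof.
move=> trABC b c a bB cC aA bca1.
have abc1 : a * b * c = 1.
  by rewrite -[a * b * c](mulgK a) -(mulgA a) -(mulgA a (b * c)) bca1 mulg1 mulgV.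
by have [-> -> ->] := trABC a b c aA bB cC abc1.
Qed.

Lemma trivial_prod3_TI A B C : trivial_prod3 A B C -> A :&: B = 1.
Proof.
move=> trABC; apply/trivgP/subsetP => x /setIP [xA xB].
have xx1 : x * x^-1 * 1 = 1 by rewrite mulgV mulg1.
have [-> _ _] := trABC x x^-1 1 xA (groupVr xB) (group1 C) xx1.
exact: group1.
Qed.

Lemma card_trivial_prod3 A B C :
  B \subset 'N(A) -> trivial_prod3 A B C ->
  #|A * B * C| = (#|A| * #|B| * #|C|)%N.
Proof.
move=> nAB trABC; have defAB := norm_joinEr nAB.
have TI_AB_C : (A <*> B)%G :&: C = 1.
  apply/trivgP/subsetP => x /setIP []; rewrite /= defAB => /mulsgP [a b aA bB ->] xC.
  have [-> -> _] := trABC a b (a * b)^-1 aA bB (groupVr xC) (mulgV _).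
  by rewrite mulg1.
by rewrite -defAB (TI_cardMg TI_AB_C) /= defAB (TI_cardMg (trivial_prod3_TI trABC)).
Qed.

Lemma trivial_prod3_card_leq G A B C :
  A \subset G -> B \subset G -> C \subset G -> B \subset 'N(A) ->
  trivial_prod3 A B C -> (#|A| * #|B| * #|C| <= #|G|)%N.
Proof.
move=> sAG sBG sCG nAB trABC; rewrite -card_trivial_prod3 //.
by apply: subset_leq_card; rewrite !mul_subG.
Qed.

End TrivialTripleProduct.

Theorem mainTheorem3 (gT : finGroupType) (G S T U : {group gT}) :
  S \subset G -> T \subset G -> U \subset G ->
  TPP S T U ->
  [\/ (S <| G)%g, (T <| G)%g | (U <| G)%g] ->
  (#|S| * #|T| * #|U| <= #|G|)%N.
Proof.
move=> sSG sTG sUG /TPP_trivial_prod3 trSTU.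
have trTUS := trivial_prod3_rot trSTU; have trUST := trivial_prod3_rot trTUS.
case=> /andP [_ nNG].
- exact: trivial_prod3_card_leq sSG sTG sUG (subset_trans sTG nNG) trSTU.
- rewrite -mulnA mulnC.
  exact: trivial_prod3_card_leq sTG sUG sSG (subset_trans sUG nNG) trTUS.
- rewrite mulnC mulnA.
  exact: trivial_prod3_card_leq sUG sSG sTG (subset_trans sSG nNG) trUST.
Qed.
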